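(* Let $Q$ be an automorphic loop satisfying condition (C) (for all $a,b\in Q$: $a(ab)=(ba)a$ if and only if $ab=ba$), and let $x,y\in Q$. If $xyx^{-1}=x^{-1}yx$, then the subloop $\langle x,y\rangle$ generated by $x$ and $y$ is commutative.
   Context: A loop is a set with a binary operation in which all equations $ax=b$, $ya=b$ are uniquely solvable and which has a two-sided identity. For $a\in L$, $R_a:x\mapsto xa$, $L_a:x\mapsto ax$; the inner mapping group is the stabilizer of the identity in the group generated by all $R_a,L_a$. A loop is automorphic if every inner mapping is an automorphism. Automorphic loops are power associative and satisfy $(x^m u)x^n=x^m(ux^n)$ for all integers $m,n$, so $xyx^{-1}$ and $x^{-1}yx$ are unambiguous. The subloop generated by a subset $S$ is the intersection of all subloops containing $S$. *)

Section Loops.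
Variable T : Type.
Variable mul : T -> T -> T.
Variable e : T.
Local Infix "*" := mul.

Definition is_loop : Prop :=
  (forall a b : T, exists! x, a * x = b) /\
  (forall a b : T, exists! y, y * a = b) /\
  (forall x : T, e * x = x /\ x * e = x).

(* Multiplication group Mlt(Q) = group generated by all R_a, L_a, described as the
   set of all finite words in the R_a, L_a and their inverses.
   [g = R_a^{-1} o f] is characterised by [R_a o g = f] (R_a is a bijection). *)
Inductive mlt : (T -> T) -> Prop :=
  | mlt_id : mlt (fun x => x)
  | mlt_R : forall a f, mlt f -> mlt (fun x => f x * a)
  | mlt_L : forall a f, mlt f -> mlt (fun x => a * f x)
  | mlt_Rinv : forall a f g, mlt f -> (forall x, g x * a = f x) -> mlt g
  | mlt_Linv : forall a f g, mlt f -> (forall x, a * g x = f x) -> mlt g.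

Definition inner_mapping (f : T -> T) : Prop := mlt f /\ f e = e.

(* Automorphic loop: every inner mapping is an automorphism
   (inner mappings are bijections, so only the homomorphism property is needed). *)
Definition automorphic : Prop :=
  is_loop /\
  forall f, inner_mapping f -> forall u v : T, f (u * v) = f u * f v.

Definition condC : Prop :=
  forall a b : T, a * (a * b) = (b * a) * a <-> a * b = b * a.

Definition subloop (H : T -> Prop) : Prop :=
  H e /\
  (forall a b, H a -> H b -> H (a * b)) /\
  (forall a b x, H a -> H b -> a * x = b -> H x) /\
  (forall a b y, H a -> H b -> y * a = b -> H y).

Definition gen_subloop (S : T -> Prop) (z : T) : Prop :=
  forall H, subloop H -> (forall s, S s -> H s) -> H z.

Definition commutative_on (H : T -> Prop) : Prop :=
  forall u v, H u -> H v -> u * v = v * u.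

End Loops.

(** In an automorphic loop the map [T_a : v |-> a \ (v a)] is an inner mapping,
    hence an automorphism fixing [a].  This yields flexibility, two-sided inverses
    with the antiautomorphic inverse property, and the identity
    [a^-1 u = T_a(u) a^-1].  With [w := T_x y] (so [x w = y x]) the hypothesis
    [(x y) x^-1 = x^-1 (y x)] becomes [(x y) x^-1 = (w x) x^-1], so [x y = w x];
    then [x (x y) = (w x) x = x (w x) = (y x) x], and condition (C) gives
    [x y = y x].  Finally, since automorphisms preserve fixed points of [T_u],
    the centralizer of any [u] is a subloop, so two commuting generators
    generate a commutative subloop. *)

From Stdlib Require Import ClassicalEpsilon.

Section Loop.
Variables (T : Type) (mul : T -> T -> T) (e : T).
Local Infix "*" := mul.

Definition centralizer (u : T) (v : T) : Prop := u * v = v * u.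

Lemma commutative_gen_subloop (S : T -> Prop) :
  (forall u, subloop T mul e (centralizer u)) ->
  (forall s t, S s -> S t -> s * t = t * s) ->
  commutative_on T mul (gen_subloop T mul e S).
Proof.
  intros Hcent HS.
  assert (HgenS : forall s r, S s -> gen_subloop T mul e S r -> s * r = r * s).
  { intros s r Hs Hr. apply (Hr (centralizer s) (Hcent s)).
    intros t Ht. exact (HS s t Hs Ht). }
  intros p q Hp Hq. apply (Hq (centralizer p) (Hcent p)).
  intros s Hs. symmetry. exact (HgenS s p Hs Hp).
Qed.

Definition ldiv (a b : T) : T := epsilon (inhabits b) (fun z => a * z = b).

Definition inv (a : T) : T := ldiv a e.

Hypothesis Hloop : is_loop T mul e.

Lemma mul1l (a : T) : e * a = a.
Proof. apply Hloop. Qed.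

Lemma mul1r (a : T) : a * e = a.
Proof. apply Hloop. Qed.

Lemma mul_cancel_l (a b c : T) : a * b = a * c -> b = c.
Proof.
  intros H. destruct (proj1 Hloop a (a * b)) as [z [_ Hz]].
  rewrite <- (Hz b eq_refl). apply Hz. symmetry. exact H.
Qed.

Lemma mul_cancel_r (a b c : T) : b * a = c * a -> b = c.
Proof.
  intros H. destruct (proj1 (proj2 Hloop) a (b * a)) as [z [_ Hz]].
  rewrite <- (Hz b eq_refl). apply Hz. symmetry. exact H.
Qed.

Lemma ldivK (a b : T) : a * ldiv a b = b.
Proof.
  unfold ldiv. apply epsilon_spec.
  destruct (proj1 Hloop a b) as [z [Hz _]]. exists z. exact Hz.
Qed.

Lemma mulV (a : T) : a * inv a = e.
Proof. apply ldivK. Qed.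

Lemma mlt_ldiv (a : T) (f : T -> T) :
  mlt T mul f -> mlt T mul (fun v => ldiv a (f v)).
Proof. intros Hf. apply (mlt_Linv T mul a f); [exact Hf | intro v; apply ldivK]. Qed.

Lemma morph_inv (f : T -> T) :
  f e = e -> (forall u v, f (u * v) = f u * f v) ->
  forall v, f (inv v) = inv (f v).
Proof.
  intros Hfe Hf v. apply (mul_cancel_l (f v)).
  rewrite <- Hf, !mulV. exact Hfe.
Qed.

Section Automorphic.
Hypothesis Haut :
  forall f, inner_mapping T mul e f -> forall u v, f (u * v) = f u * f v.

Definition conjT (a v : T) : T := ldiv a (v * a).

Lemma mul_conjT (a v : T) : a * conjT a v = v * a.
Proof. apply ldivK. Qed.

Lemma conjT_inner (a : T) : inner_mapping T mul e (conjT a).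
Proof.
  split.
  - apply mlt_ldiv, (mlt_R T mul a), mlt_id.
  - apply (mul_cancel_l a). rewrite mul_conjT, mul1l, mul1r. reflexivity.
Qed.

Lemma conjTM (a u v : T) : conjT a (u * v) = conjT a u * conjT a v.
Proof. apply Haut, conjT_inner. Qed.

Lemma conjT1 (a : T) : conjT a e = e.
Proof. apply conjT_inner. Qed.

Lemma conjT_id (a : T) : conjT a a = a.
Proof. apply (mul_cancel_l a). apply mul_conjT. Qed.

Lemma conjT_fixE (a v : T) : conjT a v = v <-> centralizer a v.
Proof.
  unfold centralizer. rewrite <- (mul_conjT a v). split.
  - intros H. rewrite H. reflexivity.
  - intros H. apply (mul_cancel_l a). symmetry. exact H.
Qed.

Lemma flexible (a v : T) : a * (v * a) = (a * v) * a.
Proof.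
  rewrite <- (mul_conjT a v), <- (mul_conjT a (a * v)), conjTM, conjT_id.
  reflexivity.
Qed.

Lemma conjT_mull (a v : T) : conjT a (a * v) = v * a.
Proof. apply (mul_cancel_l a). rewrite mul_conjT. symmetry. apply flexible. Qed.

Lemma mulVl (a : T) : inv a * a = e.
Proof.
  assert (Hfix : conjT a (inv a) = inv a).
  { rewrite (morph_inv (conjT a) (conjT1 a) (conjTM a)), conjT_id.
    reflexivity. }
  rewrite <- mul_conjT, Hfix. apply mulV.
Qed.

Lemma invK (a : T) : inv (inv a) = a.
Proof. apply (mul_cancel_l (inv a)). rewrite mulV, mulVl. reflexivity. Qed.

(* The inner mapping [L_a^-1 L_(ab) L_u] with [u := (ab) \ a] fixes [ab] and
   maps [u] to [b^-1] and [u \ (ab)^-1] to [a^-1]. *)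
Lemma inv_mul (a b : T) : inv (a * b) = inv b * inv a.
Proof.
  set (X := a * b). set (u := ldiv X a).
  set (phi := fun v => ldiv a (X * (u * v))).
  assert (phiE : forall v, a * phi v = X * (u * v)) by (intro; apply ldivK).
  assert (Hinner : inner_mapping T mul e phi).
  { split.
    - apply mlt_ldiv, (mlt_L T mul X), (mlt_L T mul u), mlt_id.
    - apply (mul_cancel_l a). rewrite phiE, !mul1r. apply ldivK. }
  assert (phiM : forall v w, phi (v * w) = phi v * phi w) by (apply Haut, Hinner).
  assert (phi_inv := morph_inv phi (proj2 Hinner) phiM).
  assert (phiX : phi X = X).
  { apply (mul_cancel_l a). rewrite phiE, flexible. unfold u. rewrite ldivK.
    reflexivity. }
  assert (phi_invu : phi (inv u) = b).
  { apply (mul_cancel_l a). rewrite phiE, mulV, mul1r. reflexivity. }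
  assert (phiu : phi u = inv b).
  { rewrite <- (invK u), phi_inv, phi_invu. reflexivity. }
  assert (phi_ldiv : phi (ldiv u (inv X)) = inv a).
  { apply (mul_cancel_l a). rewrite phiE, !ldivK, !mulV. reflexivity. }
  rewrite <- (ldivK u (inv X)), <- phiu, <- phi_ldiv, <- phiM, ldivK, phi_inv, phiX.
  reflexivity.
Qed.

Lemma mul_inv_conjT (a u : T) : inv a * u = conjT a u * inv a.
Proof.
  assert (Hu : a * inv (conjT a u) = inv u * a).
  { rewrite <- (morph_inv (conjT a) (conjT1 a) (conjTM a)).
    apply mul_conjT. }
  apply (f_equal inv) in Hu. rewrite !inv_mul, !invK in Hu.
  symmetry. exact Hu.
Qed.

Lemma centralizer_subloop (u : T) : subloop T mul e (centralizer u).
Proof.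
  split; [|split; [|split]].
  - unfold centralizer. rewrite mul1l, mul1r. reflexivity.
  - intros a b Ha Hb. apply conjT_fixE in Ha, Hb.
    apply conjT_fixE. rewrite conjTM, Ha, Hb. reflexivity.
  - intros a b v Ha Hb Hv. apply conjT_fixE in Ha, Hb. apply conjT_fixE.
    apply (mul_cancel_l a). rewrite <- Ha at 1. rewrite <- conjTM, Hv. exact Hb.
  - intros a b v Ha Hb Hv. apply conjT_fixE in Ha, Hb. apply conjT_fixE.
    apply (mul_cancel_r a). rewrite <- Ha at 1. rewrite <- conjTM, Hv. exact Hb.
Qed.

Lemma commute_of_conj_inv (x y : T) :
  condC T mul -> (x * y) * inv x = inv x * (y * x) -> x * y = y * x.
Proof.
  intros HC Hconj. set (w := conjT x y).
  assert (Hw : x * w = y * x) by apply mul_conjT.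
  assert (Hxy : x * y = w * x).
  { apply (mul_cancel_r (inv x)).
    rewrite Hconj, <- Hw, mul_inv_conjT, conjT_mull. reflexivity. }
  apply HC. rewrite Hxy, flexible, Hw. reflexivity.
Qed.

End Automorphic.
End Loop.

Theorem corollary3p2 (T : Type) (mul : T -> T -> T) (e : T)
  (HA : automorphic T mul e) (HC : condC T mul)
  (x y xi : T) (Hxi : mul x xi = e)
  (Hconj : mul (mul x y) xi = mul xi (mul y x)) :
  commutative_on T mul (gen_subloop T mul e (fun z => z = x \/ z = y)).
Proof.
  destruct HA as [Hloop Haut].
  assert (Hxi_inv : xi = inv T mul e x).
  { apply (mul_cancel_l T mul e Hloop x). rewrite Hxi, mulV; auto. }
  subst xi.
  assert (Hxy := commute_of_conj_inv T mul e Hloop Haut x y HC Hconj).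
  apply commutative_gen_subloop.
  - exact (centralizer_subloop T mul e Hloop Haut).
  - intros s t [-> | ->] [-> | ->]; auto.
Qed.
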